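(* Let $Z$ be a nonempty compact metric space. Then there exists a topologically mixing dynamical system $(X,T)$ whose set of minimal points is homeomorphic to $Z$ and such that every minimal point of $(X,T)$ is a fixed point.
   Context: A dynamical system $(X,T)$: $X$ is a compact metric space with more than one point and without isolated points, $T:X\to X$ a continuous surjection. $(X,T)$ is topologically mixing if for all nonempty open $U,V\subset X$ the set $\{n\in\mathbb{Z}_+:U\cap T^{-n}V\neq\varnothing\}$ is cofinite. A point is minimal if it lies in a minimal subset, i.e. a nonempty closed $T$-invariant set containing no nonempty closed proper subset $K'$ with $TK'\subset K'$. *)

From HB Require Import structures.
From mathcomp Require Import all_boot all_order all_algebra.
From mathcomp Require Import all_classical all_reals all_analysis.
Set Implicit Arguments. Unset Strict Implicit. Unset Printing Implicit Defensive.
Import Order.TTheory GRing.Theory Num.Theory.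
Local Open Scope classical_set_scope.

Definition dynamical_system {R : realType} (X : metricType R) (T : X -> X) : Prop :=
  [/\ compact [set: X],
      (exists x y : X, x <> y),
      (forall x : X, ~ open [set x]),
      continuous T &
      (forall y : X, exists x : X, T x = y)].

Definition topologically_mixing {X : topologicalType} (T : X -> X) : Prop :=
  forall U V : set X, open U -> open V -> U !=set0 -> V !=set0 ->
    finite_set (~` [set n : nat | U `&` ((iter n T) @^-1` V) !=set0]).

Definition minimal_set {X : topologicalType} (T : X -> X) (K : set X) : Prop :=
  [/\ K !=set0, closed K, T @` K `<=` K &
      forall K' : set X, K' `<=` K -> K' !=set0 -> closed K' ->
        T @` K' `<=` K' -> K' = K].

Definition minimal_point {X : topologicalType} (T : X -> X) (x : X) : Prop :=
  exists K, minimal_set T K /\ K x.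

Definition minimal_points {X : topologicalType} (T : X -> X) : set X :=
  [set x | minimal_point T x].

Definition homeomorphic_to {X Z : topologicalType} (A : set X) : Prop :=
  exists (f : X -> Z) (g : Z -> X),
    [/\ {within A, continuous f}, continuous g,
        (forall z, A (g z)),
        (forall x, A x -> g (f x) = x) &
        (forall z, f (g z) = z)].

From HB Require Import structures.
From mathcomp Require Import all_boot all_order all_algebra.
From mathcomp Require Import all_classical all_reals all_analysis.
From mathcomp Require Import lra zify.
Set Implicit Arguments. Unset Strict Implicit. Unset Printing Implicit Defensive.
Import Order.TTheory GRing.Theory Num.Theory.
Local Open Scope classical_set_scope.

(* X is the space of sequences in Z x {0,1} whose Z-coordinate can only change
   right after a position marked 1, with at most e+1 marks in every window of
   length 2^e; T is the shift and d(x,y) = sup_n d(x_n,y_n)/(n+1).  The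
   sparseness bound forces arbitrarily long unmarked windows in every point,
   so by compactness every closed invariant set contains a sequence without
   marks, i.e. a constant sequence (z,0)(z,0)..., which is fixed by T.  Hence
   the minimal sets are exactly these fixed points, a copy of Z.  Mixing: any
   prefix of x can be joined to any prefix of y by a single mark placed so far
   away that the sparseness bound survives. *)

Definition wsum (g : nat -> nat) (a n : nat) : nat := \sum_(i < n) g (a + i).

Lemma wsumD g a n k : wsum g a (n + k) = wsum g a n + wsum g (a + n) k.
Proof.
rewrite /wsum big_split_ord /=; congr (_ + _).
by apply: eq_bigr => i _; rewrite addnA.
Qed.

Lemma wsumS g a n : wsum g a n.+1 = wsum g a n + g (a + n).
Proof. by rewrite -addn1 wsumD /wsum big_ord1 addn0. Qed.

Lemma leq_wsum g h a n : (forall i, g i <= h i) -> wsum g a n <= wsum h a n.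
Proof. by move=> gh; apply: leq_sum => i _. Qed.

Lemma leq_wsum_len g a n k : n <= k -> wsum g a n <= wsum g a k.
Proof. by move=> /subnKC <-; rewrite wsumD leq_addr. Qed.

Lemma wsum_eq0 g a n : (forall i, a <= i < a + n -> g i = 0) -> wsum g a n = 0.
Proof.
by move=> g0; apply: big1 => i _; apply: g0; rewrite leq_addr ltn_add2l ltn_ord.
Qed.

Lemma leq_term_wsum g a n i : i < n -> g (a + i) <= wsum g a n.
Proof. by move=> lt_in; rewrite -(subnKC lt_in) wsumD wsumS; lia. Qed.

Lemma wsum_pulse_le1 q a n : wsum (fun j => j == q) a n <= 1.
Proof.
elim: n => [|n IHn]; first by rewrite /wsum big_ord0.
rewrite wsumS; case: eqP => [a_n_q|_]; last by rewrite addn0.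
by rewrite wsum_eq0 // => i ?; apply/eqP; rewrite eqb0; apply/eqP; lia.
Qed.

Lemma wsum_pulse_eq0 q a n : (q < a) || (a + n <= q) ->
  wsum (fun j => j == q) a n = 0.
Proof. by move=> ?; apply: wsum_eq0 => i ?; apply/eqP; rewrite eqb0; apply/eqP; lia. Qed.

Lemma wsum_trunc_eq0 h m a n : m <= a -> wsum (fun j => (j < m) * h j) a n = 0.
Proof. by move=> ma; apply: wsum_eq0 => i ?; have -> : (i < m) = false by lia. Qed.

Lemma wsum_trunc h m a n : wsum (fun j => (j < m) * h j) a n <= wsum h 0 m.
Proof.
have trunc_le j : (j < m) * h j <= h j by case: (j < m); rewrite ?mul1n ?mul0n.
have [ma|am] := leqP m a; first by rewrite wsum_trunc_eq0.
rewrite -{2}(subnKC (ltnW am)) wsumD add0n.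
apply: leq_trans (leq_addl _ _).
have [nd|dn] := leqP n (m - a).
  by apply: leq_trans (leq_wsum_len _ _ nd) _; apply: leq_wsum.
rewrite -(subnKC (ltnW dn)) wsumD [X in _ + X]wsum_trunc_eq0; last by lia.
by rewrite addn0; apply: leq_wsum.
Qed.

Lemma wsum_delay h N s n :
  wsum (fun j => (N <= j) * h (j - N)) s n <= wsum h (s - N) n.
Proof.
have [Ns|sN] := leqP N s.
  apply: leq_sum => i _; rewrite (leq_trans Ns (leq_addr _ _)) mul1n.
  by have -> : s + i - N = s - N + i by lia.
have -> : s - N = 0 by lia.
have [nN|Nn] := leqP n (N - s).
  by rewrite wsum_eq0 // => i ?; have -> : (N <= i) = false by lia.
rewrite -(subnKC (ltnW Nn)) wsumD wsum_eq0 ?add0n; last first.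
  by move=> i ?; have -> : (N <= i) = false by lia.
apply: leq_trans (leq_wsum_len _ _ (leq_addl _ _)).
apply: leq_sum => i _; have -> : N <= s + (N - s) + i by lia.
by rewrite mul1n; have -> : s + (N - s) + i - N = 0 + i by lia.
Qed.

Lemma wsum_delay_eq0 h N s n : s + n <= N ->
  wsum (fun j => (N <= j) * h (j - N)) s n = 0.
Proof. by move=> ?; apply: wsum_eq0 => i ?; have -> : (N <= i) = false by lia. Qed.

Lemma wsum_blocks g L : (forall s, 0 < wsum g s L) ->
  forall M s, M <= wsum g s (L * M).
Proof.
move=> g_pos; elim=> [|M IHM] s //.
by rewrite mulnS wsumD; have := g_pos s; have := IHM (s + L); lia.
Qed.

Section MetricFacts.
Local Open Scope ring_scope.

Lemma open_mdist {R : numFieldType} {T : metricType R} (U : set T) x : open U -> U x ->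
  exists2 e, 0 < e & forall y, mdist x y < e -> U y.
Proof.
rewrite openE => /[apply] /nbhs_ballP [e e0 xU]; exists e => // y xy.
by apply: xU; rewrite ballEmdist.
Qed.

Lemma continuous_mdist {R : numFieldType} {T : metricType R} {Y : pseudoMetricType R}
    (f : T -> Y) :
  (forall x e, 0 < e -> exists2 d, 0 < d & forall y, mdist x y < d -> ball (f x) e (f y)) ->
  continuous f.
Proof.
move=> cont x B /nbhs_ballP [e e0 fxB]; have [d d0 xd] := cont x e e0.
by apply/nbhs_ballP; exists d => // y; rewrite ballEmdist => /xd/fxB.
Qed.

Lemma metric_closed1 {R : realFieldType} {T : metricType R} (p : T) : closed [set p].
Proof. exact: accessible_closed_set1 (hausdorff_accessible (@metric_hausdorff R T)) p. Qed.

End MetricFacts.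

Section MarkedSequences.
Variables (R : realType) (Z : metricType R).

Definition marks (x : nat -> Z * bool) (i : nat) : nat := (x i).2.

Definition admissible (x : nat -> Z * bool) : Prop :=
  (forall n, ~~ (x n).2 -> (x n).1 = (x n.+1).1) /\
  (forall s e, wsum (marks x) s (2 ^ e) <= e.+1).

Lemma admissible_const z : admissible (fun _ => (z, false)).
Proof. by split => // s e; rewrite wsum_eq0. Qed.

Lemma admissible_pulse z : admissible (fun i => (z, i == 0)).
Proof. by split => // s e; apply: leq_trans (wsum_pulse_le1 0 s (2 ^ e)) _. Qed.

Lemma admissible_tail x : admissible x -> admissible (fun i => x i.+1).
Proof.
move=> [hold sparse]; split => [n|s e]; first exact: hold.
have <- : wsum (marks x) s.+1 (2 ^ e) = wsum (marks (fun i => x i.+1)) s (2 ^ e).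
  by apply: eq_bigr => i _; rewrite /marks addSn.
exact: sparse.
Qed.

Definition cons_seq (x : nat -> Z * bool) (i : nat) : Z * bool :=
  if i is j.+1 then x j else ((x 0).1, false).

Lemma admissible_cons x : admissible x -> admissible (cons_seq x).
Proof.
move=> [hold sparse]; split => [[|n] //|[|s] e]; first exact: hold.
  rewrite -(prednK (expn_gt0 2 e)) -add1n wsumD add0n.
  rewrite {1}/wsum big_ord1 /marks /= add0n.
  have -> : wsum (marks (cons_seq x)) 1 (2 ^ e).-1 = wsum (marks x) 0 (2 ^ e).-1.
    by apply: eq_bigr.
  exact: leq_trans (leq_wsum_len _ _ (leq_pred _)) (sparse 0 e).
have -> : wsum (marks (cons_seq x)) s.+1 (2 ^ e) = wsum (marks x) s (2 ^ e).
  by apply: eq_bigr => i _; rewrite /marks addSn.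
exact: sparse.
Qed.

Lemma wsum_trunc_marks x m s e : admissible x ->
  wsum (fun j => (j < m) * marks x j) s (2 ^ e) <= minn e.+1 m.+1.
Proof.
move=> [_ sparse]; rewrite leq_min; apply/andP; split.
  apply: leq_trans (sparse s e); apply: leq_wsum => j.
  by case: (j < m); rewrite ?mul1n ?mul0n.
have m_le : m <= 2 ^ m by apply/ltnW/ltn_expl.
exact: leq_trans (wsum_trunc _ _ _ _) (leq_trans (leq_wsum_len _ _ m_le) (sparse 0 m)).
Qed.

Lemma admissible_unmarked_window x : admissible x ->
  forall L, exists s, forall i, i < L -> (x (s + i)).2 = false.
Proof.
move=> [_ sparse] L; apply: contrapT => /forallNP no_window.
have marked s : 0 < wsum (marks x) s L.
  have /existsNP [i /not_implyP [iL marked_i]] := no_window s.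
  apply: leq_trans (leq_term_wsum _ _ iL); rewrite /marks.
  by move: marked_i; case: (x _).2.
have many := wsum_blocks marked (2 ^ (L + 2)) 0.
have L_lt : L < 2 ^ L by apply: ltn_expl.
have len_le : L * 2 ^ (L + 2) <= 2 ^ (L + (L + 2)).
  by rewrite (expnD 2 L (L + 2)) leq_mul2r ltnW ?L_lt ?orbT.
move: (leq_trans many (leq_trans (leq_wsum_len _ _ len_le) (sparse 0 (L + (L + 2))))).
rewrite expnD; lia.
Qed.

(* A window meeting two of the three blocks of marks of [glue x y m N] (the
   prefix of x, the single mark at [m + gap m], the prefix of y) is longer
   than [gap m], so it is allowed the at most [2 m + 3] marks it contains. *)
Definition gap (m : nat) : nat := 2 ^ (2 * m + 2).

Definition glue (x y : nat -> Z * bool) (m N n : nat) : Z * bool :=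
  if n < m then x n
  else if n < m + gap m then ((x m.-1).1, false)
  else if n == m + gap m then ((x m.-1).1, true)
  else if n < N then ((y 0).1, false)
  else if n < N + m then y (n - N)
  else ((y m.-1).1, false).

Lemma glue_left x y m N n : n < m -> glue x y m N n = x n.
Proof. by move=> nm; rewrite /glue nm. Qed.

Lemma glue_right x y m N i : m + 2 * gap m <= N -> i < m ->
  glue x y m N (N + i) = y i.
Proof.
move=> mN im; have gap_gt0 : 0 < gap m by rewrite expn_gt0.
rewrite /glue; do 4 (case: ifP => [?|_]; first lia).
by case: ifP => [_|?]; [rewrite addKn | lia].
Qed.

Lemma glue_hold x y m N : admissible x -> admissible y -> 0 < m ->
  m + 2 * gap m <= N ->
  forall n, ~~ (glue x y m N n).2 -> (glue x y m N n).1 = (glue x y m N n.+1).1.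
Proof.
move=> [holdx _] [holdy _] m_gt0 mN n; have gap_gt0 : 0 < gap m by rewrite expn_gt0.
rewrite /glue; repeat case: ifP => ?; try lia; try done.
- exact: holdx.
- by have -> : m.-1 = n by lia.
- by have -> : n.+1 - N = 0 by lia.
- have -> : n.+1 - N = (n - N).+1 by lia.
  exact: holdy.
- by have -> : m.-1 = n - N by lia.
Qed.

Lemma marks_glue_le x y m N j : marks (glue x y m N) j <=
  (j < m) * marks x j + (j == m + gap m) + (N <= j) * ((j - N < m) * marks y (j - N)).
Proof.
rewrite /marks /glue; repeat case: ifP => ? /=.
all: by case: (x j).2; case: (y (j - N)).2; lia.
Qed.

Lemma glue_sparse x y m N : admissible x -> admissible y -> m + 2 * gap m <= N ->
  forall s e, wsum (marks (glue x y m N)) s (2 ^ e) <= e.+1.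
Proof.
move=> adx ady mN s e; set P := 2 ^ e.
pose Cx := wsum (fun j => (j < m) * marks x j) s P.
pose Cq := wsum (fun j => j == m + gap m) s P.
pose Cy := wsum (fun j => (N <= j) * ((j - N < m) * marks y (j - N))) s P.
have split_marks : wsum (marks (glue x y m N)) s P <= Cx + Cq + Cy.
  by apply: leq_trans (leq_wsum _ _ (marks_glue_le x y m N)) _; rewrite /wsum !big_split.
have Cx_le : Cx <= minn e.+1 m.+1 := wsum_trunc_marks m s e adx.
have Cx0 : m <= s -> Cx = 0 by exact: wsum_trunc_eq0.
have Cq_le : Cq <= 1 := wsum_pulse_le1 _ _ _.
have Cq0 : (m + gap m < s) || (s + P <= m + gap m) -> Cq = 0 by exact: wsum_pulse_eq0.
have Cy_le : Cy <= minn e.+1 m.+1.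
  apply: leq_trans (wsum_trunc_marks m (s - N) e ady).
  exact: (wsum_delay (fun i => (i < m) * marks y i)).
have Cy0 : s + P <= N -> Cy = 0.
  exact: (wsum_delay_eq0 (fun i => (i < m) * marks y i)).
have long_window : gap m < P -> 2 * m + 2 < e by rewrite /gap ltn_exp2l.
move: split_marks Cx_le Cx0 Cq_le Cq0 Cy_le Cy0 long_window; lia.
Qed.

Lemma admissible_glue x y m N : admissible x -> admissible y -> 0 < m ->
  m + 2 * gap m <= N -> admissible (glue x y m N).
Proof. by move=> adx ady m_gt0 mN; split; [exact: glue_hold | exact: glue_sparse]. Qed.

Local Open Scope ring_scope.

Definition mark_dist (a b : Z * bool) : R := Num.min 1 (mdist a.1 b.1) + (a.2 != b.2)%:R.

Definition weight (n : nat) : R := n.+1%:R^-1.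

Definition coord_dist (x y : nat -> Z * bool) (n : nat) : R :=
  weight n * mark_dist (x n) (y n).

Definition seq_dist (x y : nat -> Z * bool) : R := sup (range (coord_dist x y)).

Lemma min1_triangle (p q r : R) : 0 <= p -> 0 <= q -> r <= p + q ->
  Num.min 1 r <= Num.min 1 p + Num.min 1 q.
Proof.
move=> p0 q0 rpq; rewrite /Num.min.
by case: ifP => [/ltW|]; case: ifP => [/ltW|]; case: ifP => [/ltW|] /=;
  rewrite ?ltNge => ?; try move/negbFE; try move=> ?; lra.
Qed.

Lemma min1_ge0 (r : R) : 0 <= r -> 0 <= Num.min 1 r.
Proof. by move=> r0; rewrite le_min ler01. Qed.

Lemma min1_le (r : R) : Num.min 1 r <= r.
Proof. by rewrite ge_min lexx orbT. Qed.

Lemma mark_dist_ge0 a b : 0 <= mark_dist a b.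
Proof. by rewrite addr_ge0 ?ler0n ?min1_ge0 ?mdist_ge0. Qed.

Lemma mark_dist_le2 a b : mark_dist a b <= 2.
Proof.
have : Num.min 1 (mdist a.1 b.1) <= 1 by rewrite ge_min lexx.
have : (a.2 != b.2)%:R <= 1 :> R by case: (_ != _); rewrite ?ler01.
rewrite /mark_dist; lra.
Qed.

Lemma mark_distC a b : mark_dist a b = mark_dist b a.
Proof. by rewrite /mark_dist metric_sym eq_sym. Qed.

Lemma mark_distxx a : mark_dist a a = 0.
Proof. by rewrite /mark_dist mdistxx eqxx addr0 /Num.min ltr10. Qed.

Lemma mark_dist_eq0 a b : mark_dist a b = 0 -> a = b.
Proof.
move=> /eqP; rewrite paddr_eq0 ?ler0n ?min1_ge0 ?mdist_ge0 // pnatr_eq0 eqb0 negbK.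
case/andP => /eqP d0 /eqP; move: d0; rewrite /Num.min.
case: ifP => [_ /eqP|_ /mdist_positivity]; first by rewrite oner_eq0.
by case: a b => [a1 a2] [b1 b2] /= -> ->.
Qed.

Lemma mark_dist_triangle a b c : mark_dist a c <= mark_dist a b + mark_dist b c.
Proof.
have := min1_triangle (mdist_ge0 a.1 b.1) (mdist_ge0 b.1 c.1) (metric_triangle a.1 b.1 c.1).
have : (a.2 != c.2)%:R <= (a.2 != b.2)%:R + (b.2 != c.2)%:R :> R.
  by move: a.2 b.2 c.2 => [] [] [] /=; rewrite ?addr0 ?add0r; lra.
rewrite /mark_dist; lra.
Qed.

Lemma weight_gt0 n : 0 < weight n.
Proof. by rewrite invr_gt0 ltr0n. Qed.

Lemma weight_le1 n : weight n <= 1.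
Proof. by rewrite invf_le1 ?ltr0n // ler1n. Qed.

Lemma weight_le m n : (m <= n)%N -> weight n <= weight m.
Proof. by move=> mn; rewrite lef_pV2 ?posrE ?ltr0n // ler_nat. Qed.

Lemma weight_le2S n : weight n <= 2 * weight n.+1.
Proof.
rewrite /weight ler_pdivlMr ?ltr0n // mulrC ler_pdivrMr ?ltr0n //.
by rewrite -natrM ler_nat; lia.
Qed.

Lemma weight_small (e : R) : 0 < e -> exists k, 2 * weight k < e.
Proof.
move=> e0; have e2 : 0 < e / 2 by lra.
have [k _ Hk] := near_infty_natSinv_lt (PosNum e2).
exists k; have /= := Hk k (leqnn k); rewrite /weight; set w := k.+1%:R^-1; lra.
Qed.

Lemma coord_dist_ge0 x y n : 0 <= coord_dist x y n.
Proof. by rewrite mulr_ge0 ?mark_dist_ge0 // ltW // weight_gt0. Qed.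

Lemma coord_dist_le x y n : coord_dist x y n <= 2 * weight n.
Proof. by rewrite /coord_dist mulrC ler_wpM2r ?mark_dist_le2 // ltW // weight_gt0. Qed.

Lemma seq_dist_ge x y n : coord_dist x y n <= seq_dist x y.
Proof.
apply: ub_le_sup; last by exists n.
exists 2 => _ [k _ <-]; apply: le_trans (coord_dist_le _ _ _) _.
by have := weight_le1 k; lra.
Qed.

Lemma seq_dist_le x y c : (forall n, coord_dist x y n <= c) -> seq_dist x y <= c.
Proof.
by move=> le_c; apply: ge_sup; [exists (coord_dist x y 0), 0%N | move=> _ [n _ <-]].
Qed.

Lemma seq_dist_le_prefix x y k c : 2 * weight k <= c ->
  (forall n, (n < k)%N -> mark_dist (x n) (y n) <= c) -> seq_dist x y <= c.
Proof.
move=> kc prefix; apply: seq_dist_le => n; have [nk|kn] := ltnP n k.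
  exact: le_trans (ler_piMl (mark_dist_ge0 _ _) (weight_le1 n)) (prefix n nk).
apply: le_trans (coord_dist_le _ _ _) (le_trans _ kc).
by rewrite ler_wpM2l ?weight_le.
Qed.

Lemma seq_distxx x : seq_dist x x = 0.
Proof.
apply/eqP; rewrite eq_le (le_trans (coord_dist_ge0 x x 0) (seq_dist_ge _ _ _)) andbT.
by apply: seq_dist_le => n; rewrite /coord_dist mark_distxx mulr0.
Qed.

Lemma seq_distC x y : seq_dist x y = seq_dist y x.
Proof.
rewrite /seq_dist; congr sup; apply/funext => r; rewrite propeqE.
by split => -[n _ <-]; exists n => //; rewrite /coord_dist mark_distC.
Qed.

Lemma seq_dist_triangle y x z : seq_dist x z <= seq_dist x y + seq_dist y z.
Proof.
apply: seq_dist_le => n; apply: le_trans (lerD (seq_dist_ge x y n) (seq_dist_ge y z n)).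
by rewrite /coord_dist -mulrDr ler_wpM2l ?mark_dist_triangle // ltW // weight_gt0.
Qed.

Lemma seq_dist_eq0 x y : seq_dist x y = 0 -> x = y.
Proof.
move=> d0; apply/funext => n; apply: mark_dist_eq0.
have /eqP : coord_dist x y n = 0.
  by apply/eqP; rewrite eq_le coord_dist_ge0 -d0 seq_dist_ge.
by rewrite mulf_eq0 gt_eqF ?weight_gt0 // => /eqP.
Qed.

Lemma seq_dist_mark x y i : seq_dist x y < weight i -> (x i).2 = (y i).2.
Proof.
move=> lt_w; have : mark_dist (x i) (y i) < 1.
  rewrite -(ltr_pM2l (weight_gt0 i)) mulr1; exact: le_lt_trans (seq_dist_ge _ _ _) lt_w.
rewrite /mark_dist; case: eqP => // _.
by have := min1_ge0 (mdist_ge0 (x i).1 (y i).1); rewrite /=; lra.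
Qed.

Lemma seq_dist_point x y i (r : R) : r <= 1 -> seq_dist x y < weight i * r ->
  mdist (x i).1 (y i).1 < r.
Proof.
move=> r1 lt_wr; have : mark_dist (x i) (y i) < r.
  rewrite -(ltr_pM2l (weight_gt0 i)); exact: le_lt_trans (seq_dist_ge _ _ _) lt_wr.
rewrite /mark_dist; have := ler0n R ((x i).2 != (y i).2).
by rewrite /Num.min; case: ifP; lra.
Qed.

Lemma seq_dist_tail x y : seq_dist (fun i => x i.+1) (fun i => y i.+1) <= 2 * seq_dist x y.
Proof.
apply: seq_dist_le => n; rewrite /coord_dist.
apply: le_trans (_ : 2 * (weight n.+1 * mark_dist (x n.+1) (y n.+1)) <= _).
  by rewrite mulrA ler_wpM2r ?mark_dist_ge0 ?weight_le2S.
by rewrite ler_wpM2l //; exact: (seq_dist_ge x y n.+1).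
Qed.

Definition mseq := {x : nat -> Z * bool | admissible x}.
HB.instance Definition _ := gen_eqMixin mseq.
HB.instance Definition _ := gen_choiceMixin mseq.

Lemma mseq_eq (x y : mseq) : sval x = sval y -> x = y.
Proof. by apply: eq_sig_hprop => ? ? ?; exact: Prop_irrelevance. Qed.

Definition mseq_dist (x y : mseq) : R := seq_dist (sval x) (sval y).

HB.instance Definition _ := @isMetric.Build R mseq mseq_dist
  (fun x => seq_distxx (sval x))
  (fun x y d0 => mseq_eq (seq_dist_eq0 d0))
  (fun x y => seq_distC (sval x) (sval y))
  (fun y x z => seq_dist_triangle (sval y) (sval x) (sval z)).

Lemma mdist_mseqE (x y : mseq) : mdist x y = seq_dist (sval x) (sval y).
Proof. by []. Qed.

Lemma mseq_close (x y : mseq) k (e : R) : 2 * weight k < e ->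
  (forall i, (i < k)%N -> sval x i = sval y i) -> mdist x y < e.
Proof.
move=> ke agree; apply: le_lt_trans ke; apply: seq_dist_le_prefix => // n nk.
by rewrite agree // mark_distxx mulr_ge0 // ltW // weight_gt0.
Qed.

Definition const_mseq (z : Z) : mseq := exist _ _ (admissible_const z).
Definition pulse_mseq (z : Z) : mseq := exist _ _ (admissible_pulse z).
Definition shift (x : mseq) : mseq := exist _ _ (admissible_tail (proj2_sig x)).

Lemma iter_shiftE n (x : mseq) : sval (iter n shift x) = fun i => sval x (n + i)%N.
Proof. by elim: n => [|n IHn] //=; rewrite IHn; apply/funext => i; rewrite addnS addSn. Qed.

Lemma shift_continuous : continuous shift.
Proof.
apply: continuous_mdist => x e e0; exists (e / 2); first lra.
move=> y xy; rewrite ballEmdist /= mdist_mseqE.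
by apply: le_lt_trans (seq_dist_tail _ _) _; rewrite mdist_mseqE in xy; lra.
Qed.

Lemma shift_surjective (y : mseq) : exists x, shift x = y.
Proof. by exists (exist _ _ (admissible_cons (proj2_sig y))); apply: mseq_eq. Qed.

Lemma const_mseq_continuous : continuous const_mseq.
Proof.
apply: continuous_mdist => z e e0; exists e => // z' zz'.
rewrite ballEmdist /= mdist_mseqE; apply: le_lt_trans zz'.
apply: seq_dist_le => n; rewrite /coord_dist /mark_dist /= addr0.
exact: le_trans (ler_piMl (min1_ge0 (mdist_ge0 _ _)) (weight_le1 n)) (min1_le _).
Qed.

Lemma head_point_continuous : continuous (fun x : mseq => (sval x 0%N).1).
Proof.
apply: continuous_mdist => x e e0.
have [r [r0 r1 re]] : exists r : R, [/\ 0 < r, r <= 1 & r <= e].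
  by case: (lerP e 1) => he; [exists e | exists 1]; split => //; lra.
exists (weight 0 * r); first by rewrite mulr_gt0 ?weight_gt0.
move=> y xy; rewrite ballEmdist /=; apply: lt_le_trans re.
exact: seq_dist_point r1 xy.
Qed.

Section UltrafilterLimit.
Context (F : set_system mseq) {FF : ProperFilter F} (z : nat -> Z) (b : nat -> bool).
Hypothesis Fz : forall n S, nbhs (z n) S -> F [set x : mseq | S (sval x n).1].
Hypothesis Fb : forall n, F [set x : mseq | (sval x n).2 = b n].

Lemma coord_limit_admissible : admissible (fun n => (z n, b n)).
Proof.
split => [n /= bn0|s e].
  apply: contrapT => /eqP zne; have r0 : 0 < mdist (z n) (z n.+1) by rewrite mdist_gt0.
  set r := mdist _ _ in r0; have r2 : 0 < r / 2 by lra.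
  have [x [[xn xn1] bxn]] := filter_ex (filterI (filterI
    (Fz (nbhsx_ballx (z n) _ r2)) (Fz (nbhsx_ballx (z n.+1) _ r2))) (Fb n)).
  move: xn xn1; rewrite !ballEmdist /= -(proj1 (proj2_sig x) n) ?bxn //.
  have := metric_triangle (z n) (sval x n).1 (z n.+1).
  by rewrite (metric_sym (sval x n).1 (z n.+1)) -/r; lra.
have [x agree] :=
  filter_ex (filter_forall filter_filter (fun i : 'I_(2 ^ e) => Fb (s + i))).
apply: leq_trans (proj2 (proj2_sig x) s e); apply/eq_leq/eq_bigr => i _.
by rewrite /marks /= agree.
Qed.

Lemma coord_limit_cvg (adm : admissible (fun n => (z n, b n))) :
  F --> (exist _ _ adm : mseq).
Proof.
move=> B /nbhs_ballP [e /= e0 pB]; have e2 : 0 < e / 2 by lra.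
have [k hk] := weight_small e2.
pose near_coord (i : 'I_k) :=
  [set x : mseq | (sval x i).2 = b i /\ mdist (z i) (sval x i).1 < e / 2].
have Fnear i : F (near_coord i).
  apply: filterS (filterI (Fb i) (Fz (nbhsx_ballx (z i) _ e2))) => x [bx].
  by rewrite ballEmdist.
apply: filterS (filter_forall filter_filter Fnear) => x near_x; apply: pB.
rewrite ballEmdist /= mdist_mseqE.
suff : seq_dist (fun n => (z n, b n)) (sval x) <= e / 2 by lra.
apply: seq_dist_le_prefix; first lra.
move=> n nk; have [bx zx] := near_x (Ordinal nk).
by rewrite /mark_dist /= bx eqxx addr0; apply: le_trans (min1_le _) (ltW zx).
Qed.

End UltrafilterLimit.

Lemma mseq_compact : compact [set: Z] -> compact [set: mseq].
Proof.
move=> Zc; rewrite compact_ultra => F FU _.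
have Fz n : exists z : Z, forall S, nbhs z S -> F [set x : mseq | S (sval x n).1].
  have [z [_ cz]] := Zc ((fun x : mseq => (sval x n).1) @ F) _ filterT.
  exists z => S zS; have [//|FnS] := in_ultra_setVsetC [set x : mseq | S (sval x n).1] FU.
  by have [w []] := cz (~` S) S FnS zS.
have Fb n : exists b : bool, F [set x : mseq | (sval x n).2 = b].
  have [Fb|FnB] := in_ultra_setVsetC [set x : mseq | (sval x n).2 = true] FU.
    by exists true.
  by exists false; apply: filterS FnB => x /=; case: (sval x n).2.
have [z Fz'] := choice Fz; have [b Fb'] := choice Fb.
by exists (exist _ _ (coord_limit_admissible Fz' Fb')); split => //; apply: coord_limit_cvg.
Qed.

Definition unmarked (x : mseq) : Prop := forall i, (sval x i).2 = false.

Lemma unmarked_const_head x : unmarked x -> const_mseq (sval x 0%N).1 = x.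
Proof.
move=> unm; apply: mseq_eq; have hold := proj1 (proj2_sig x).
have coord n : (sval x n).1 = (sval x 0%N).1.
  by elim: n => [|n IHn] //; rewrite -hold ?unm.
by apply/funext => n /=; rewrite -(unm n) -(coord n); case: (sval x n).
Qed.

Lemma shift_const z : shift (const_mseq z) = const_mseq z.
Proof. exact: mseq_eq. Qed.

Lemma closed_unmarked_prefix L :
  closed [set x : mseq | forall i, (i < L)%N -> (sval x i).2 = false].
Proof.
move=> x clx i iL.
have [y [y_pre xy]] := clx _ (nbhsx_ballx x (weight L) (weight_gt0 L)).
rewrite -(y_pre i iL); apply: seq_dist_mark; rewrite ballEmdist in xy.
exact: lt_le_trans xy (weight_le (ltnW iL)).
Qed.

Lemma closed_invariant_unmarked (K : set mseq) : compact [set: Z] ->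
  K !=set0 -> closed K -> shift @` K `<=` K -> exists2 p, K p & unmarked p.
Proof.
move=> Zc [x0 Kx0] Kc Kinv.
pose W L := K `&` [set x : mseq | forall i, (i < L)%N -> (sval x i).2 = false].
have iterK n x : K x -> K (iter n shift x).
  by elim: n x => [//|n IHn] x Kx; apply: Kinv; exists (iter n shift x) => //; apply: IHn.
have W_neq0 L : W L !=set0.
  have [s unm] := admissible_unmarked_window (proj2_sig x0) L.
  exists (iter s shift x0); split; first exact: iterK.
  by move=> i iL; rewrite iter_shiftE; apply: unm.
pose G := filter_from [set: nat] W.
have GF : Filter G.
  apply: filter_from_filter; first by exists 0%N.
  move=> i j _ _; exists (maxn i j) => // x [Kx unm].
  by split; split=> // k kl; apply: unm; lia.
have GP : ProperFilter G := filter_from_proper GF (fun L _ => W_neq0 L).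
have Kcpt : compact K := subclosed_compact Kc (mseq_compact Zc) (@subsetT _ K).
have GK : G K by exists 0%N => // x [].
have [p [Kp cp]] := Kcpt G GP GK.
exists p => // i.
have : closure (W i.+1) p by rewrite clusterE in cp; apply: cp; exists i.+1.
have /closure_id <- : closed (W i.+1) := closedI Kc (@closed_unmarked_prefix i.+1).
by move=> [_]; apply.
Qed.

Lemma minimal_set_singleton (K : set mseq) : compact [set: Z] ->
  minimal_set shift K -> exists2 p, unmarked p & K = [set p].
Proof.
move=> Zc [Kne Kc Kinv Kmin]; have [p Kp unm] := closed_invariant_unmarked Zc Kne Kc Kinv.
exists p => //; apply/esym/Kmin; [by move=> _ -> | by exists p | exact: metric_closed1 |].
by move=> _ [_ -> <-]; rewrite -(unmarked_const_head unm) shift_const.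
Qed.

Lemma minimal_point_unmarked x : compact [set: Z] -> minimal_point shift x -> unmarked x.
Proof.
by move=> Zc [K [/(minimal_set_singleton Zc) [p unm ->] ->]].
Qed.

Lemma const_minimal_point z : minimal_point shift (const_mseq z).
Proof.
exists [set const_mseq z]; split => //; split; first by exists (const_mseq z).
- exact: metric_closed1.
- by move=> _ [_ -> <-]; rewrite shift_const.
- move=> K' K'sub [y K'y] _ _; apply/seteqP; split=> // _ ->.
  by rewrite -(K'sub _ K'y).
Qed.

Lemma shift_mixing : topologically_mixing shift.
Proof.
move=> U V Uo Vo [x Ux] [y Vy].
have [e1 e1_gt0 xU] := open_mdist Uo Ux; have [e2 e2_gt0 yV] := open_mdist Vo Vy.
have [k1 hk1] := weight_small e1_gt0; have [k2 hk2] := weight_small e2_gt0.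
pose m := (maxn k1 k2).+1.
have k1m i : (i < k1)%N -> (i < m)%N by rewrite /m; lia.
have k2m i : (i < k2)%N -> (i < m)%N by rewrite /m; lia.
apply: (sub_finite_set _ (finite_II (m + 2 * gap m)%N)) => N /= notUV.
rewrite ltnNge; apply/negP => mN; apply: notUV.
pose w : mseq := exist _ _ (admissible_glue (proj2_sig x) (proj2_sig y) (ltn0Sn _) mN).
exists w; split.
  by apply/xU/(mseq_close hk1) => i /k1m im; rewrite /= glue_left.
by apply/yV/(mseq_close hk2) => i /k2m im; rewrite iter_shiftE /= glue_right.
Qed.

Lemma mseq_not_isolated (x : mseq) : ~ open [set x].
Proof.
move=> xo; have [e e0 near_x] := open_mdist xo (erefl x).
have [k hk] := weight_small e0.
have kN : (k.+1 + 2 * gap k.+1 <= k.+1 + 2 * gap k.+1)%N := leqnn _.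
pose glue_x (y : mseq) : mseq :=
  exist _ _ (admissible_glue (proj2_sig x) (proj2_sig y) (ltn0Sn k) kN).
have glue_xE y : glue_x y = x.
  by apply/near_x/(mseq_close hk) => i ik; rewrite /= glue_left // ltnS ltnW.
pose z := (sval x 0%N).1; pose N := (k.+1 + 2 * gap k.+1 + 0)%N.
have := congr1 (fun w : mseq => sval w N)
  (etrans (glue_xE (const_mseq z)) (esym (glue_xE (pulse_mseq z)))).
by rewrite /= !glue_right.
Qed.

Lemma const_neq_pulse z : const_mseq z <> pulse_mseq z.
Proof. by move/(congr1 (fun x : mseq => (sval x 0%N).2)). Qed.

End MarkedSequences.

Theorem proposition6p3 (R : realType) (Z : metricType R) :
  compact [set: Z] -> [set: Z] !=set0 ->
  exists (X : metricType R) (T : X -> X),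
    [/\ dynamical_system T, topologically_mixing T,
        @homeomorphic_to X Z (minimal_points T) &
        (forall x : X, minimal_point T x -> T x = x)].
Proof.
move=> Zc [z0 _]; exists (mseq Z), (@shift R Z); split.
- split; first exact: mseq_compact.
  + by exists (const_mseq z0), (pulse_mseq z0); apply: const_neq_pulse.
  + exact: mseq_not_isolated.
  + exact: shift_continuous.
  + exact: shift_surjective.
- exact: shift_mixing.
- exists (fun x => (sval x 0%N).1), (@const_mseq R Z); split.
  + exact/continuous_subspaceT/head_point_continuous.
  + exact: const_mseq_continuous.
  + exact: const_minimal_point.
  + by move=> x /(minimal_point_unmarked Zc) /unmarked_const_head.
  + by [].
- move=> x /(minimal_point_unmarked Zc) /unmarked_const_head <-.
  exact: shift_const.
Qed.
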